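(* Assume Case 2 holds and $d=0$. Then $\delta>d$, and with $\mathcal{I}_f=[l_1,\alpha]$ we have $w_l(Q^n)=\gamma_n=\gamma\delta^{n-1}$ for every $n\ge1$ and every $l\in\mathcal{I}_f$. Moreover, if $\delta=T_{s-1}$ then $\mathcal{I}_f=\{l_1\}$ and $w_{l_1}(Q^n)=\gamma_n$ for all $n\ge1$.
   Context: Let $f(z,w)=(p(z),q(z,w))$ be a holomorphic skew product germ at the origin of $\mathbb{C}^2$ with $f(0,0)=(0,0)$, where $p(z)=a_\delta z^\delta+O(z^{\delta+1})$ with $a_\delta\neq0$ and integer $\delta\ge1$, and $q(z,w)=\sum_{i+j\ge1}b_{ij}z^iw^j$ is not identically zero. For $n\ge1$ write $f^n=(p^n,Q^n)$. For a nonzero germ $g=\sum g_{ij}z^iw^j$ and real $l>0$ let $w_l(g)=\min\{i+lj: g_{ij}\neq0\}$. The Newton polygon $N(g)$ is the convex hull of $\bigcup_{g_{ij}\neq0}\{(x,y):x\ge i,\ y\ge j\}$. Let $(n_1,m_1),\dots,(n_s,m_s)$ be the vertices of $N(q)$ with $n_1<\cdots<n_s$, $m_1>\cdots>m_s$; for $1\le k\le s-1$ let $T_k$ be the $y$-intercept of the line through $(n_k,m_k)$ and $(n_{k+1},m_{k+1})$. Case 2 means: $s>1$ and $\delta\le T_{s-1}$; set $(\gamma,d)=(n_s,m_s)$ and $l_1=\frac{n_s-n_{s-1}}{m_{s-1}-m_s}$. Define $\gamma_n=\gamma(\delta^{n-1}+\delta^{n-2}d+\cdots+d^{n-1})$ (with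 $0^0=1$, so $\gamma_n=\gamma\delta^{n-1}$ when $d=0$) and $\alpha=\gamma/(\delta-d)$. *)

From HB Require Import structures.
From mathcomp Require Import all_boot all_order all_algebra.
From mathcomp Require Import reals.
From mathcomp Require Import complex.
Set Implicit Arguments. Unset Strict Implicit. Unset Printing Implicit Defensive.
Import Order.TTheory GRing.Theory Num.Theory.
Local Open Scope ring_scope.
Local Open Scope complex_scope.

Section Germs.
Variable R : realType.
Local Notation C := (R[i]).

(* formal power series in two variables z, w : coefficient of z^i w^j is s i j *)
Definition series2 := nat -> nat -> C.
Definition series1 := nat -> C.

(* holomorphic germ = convergent power series (Cauchy estimate form) *)
Definition convergent1 (s : series1) : Prop :=
  exists M K : R, forall i, `|s i| <= (M * K ^+ i)%:C.
Definition convergent2 (s : series2) : Prop :=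
  exists M K : R, forall i j, `|s i j| <= (M * K ^+ (i + j))%:C.

Definition ser1to2 (s : series1) : series2 :=
  fun i j => if j == 0%N then s i else 0.

(* bivariate polynomial truncation: outer variable w, inner variable z *)
Definition trunc2 (N : nat) (s : series2) : {poly {poly C}} :=
  \sum_(i < N.+1) \sum_(j < N.+1) (s i j *: 'X^i)%:P * 'X^j.

Definition coef2 (P : {poly {poly C}}) (a b : nat) : C := (P`_b)`_a.

(* composition g(u(z,w), v(z,w)), for u, v without constant term:
   the coefficient of z^a w^b only depends on terms of total degree <= a+b *)
Definition comp2 (g u v : series2) : series2 :=
  fun a b =>
    let N := (a + b)%N in
    coef2 (\sum_(i < N.+1) \sum_(j < N.+1)
             (g i j)%:P%:P * ((trunc2 N u) ^+ i * (trunc2 N v) ^+ j)) a b.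

Definition Zser : series2 := fun i j => ((i == 1%N) && (j == 0%N))%:R.
Definition Wser : series2 := fun i j => ((i == 0%N) && (j == 1%N))%:R.

(* f^n = (p^n, Q^n), with f^0 = id and f^(n+1) = f o f^n *)
Fixpoint skew_iter (p : series1) (q : series2) (n : nat) : series2 * series2 :=
  match n with
  | 0%N => (Zser, Wser)
  | n'.+1 => let uv := skew_iter p q n' in
             (comp2 (ser1to2 p) uv.1 uv.2, comp2 q uv.1 uv.2)
  end.

Definition Qiter (p : series1) (q : series2) (n : nat) : series2 :=
  (skew_iter p q n).2.

Definition wl_is (g : series2) (l x : R) : Prop :=
  (exists i j, g i j != 0 /\ i%:R + l * j%:R = x) /\
  (forall i j, g i j != 0 -> x <= i%:R + l * j%:R).

(* Newton polygon N(g): convex hull of the union of quadrants (i,j) + R_{>=0}^2 *)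
Definition in_newton (g : series2) (x y : R) : Prop :=
  exists (k : nat) (c : 'I_k -> R) (pt : 'I_k -> nat * nat),
    [/\ forall t, 0 <= c t,
        \sum_(t < k) c t = 1,
        forall t, g (pt t).1 (pt t).2 != 0,
        \sum_(t < k) c t * ((pt t).1)%:R <= x &
        \sum_(t < k) c t * ((pt t).2)%:R <= y].

Definition newton_vertex (g : series2) (x y : R) : Prop :=
  in_newton g x y /\
  forall x1 y1 x2 y2 t, in_newton g x1 y1 -> in_newton g x2 y2 ->
    0 < t < 1 -> x = t * x1 + (1 - t) * x2 -> y = t * y1 + (1 - t) * y2 ->
    x1 = x2 /\ y1 = y2.

End Germs.

(* gamma_n = gamma (delta^(n-1) + delta^(n-2) d + ... + d^(n-1)), with 0^0 = 1 *)
Definition gamma_n (gamma delta d n : nat) : nat :=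
  (gamma * \sum_(k < n) delta ^ (n.-1 - k) * d ^ k)%N.

From HB Require Import structures.
From mathcomp Require Import all_boot all_order all_algebra.
From mathcomp Require Import reals.
From mathcomp Require Import complex.
From mathcomp Require Import ring lra zify.
From Stdlib Require Import Classical.
Import Order.TTheory GRing.Theory Num.Theory.
Local Open Scope ring_scope.
Set Implicit Arguments. Unset Strict Implicit. Unset Printing Implicit Defensive.

(* Case 2 with d = 0: the last edge of the Newton polygon N(q) joins
   (n1, m) = (n_(s-1), m_(s-1)) to (g, 0) = (gamma, 0), with slope weight
   l1 = (g - n1) / m, and alpha = g / delta.

   Monomials z^a w^b are ordered by their l-weight a + l b, ties being broken
   in favour of the larger w-degree.  A series is "above" a monomial when all
   its nonzero coefficients are at least that monomial; this is stable under
   products, sums and truncations, and when a product is bounded by the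
   product of leading monomials, the leading coefficients multiply.  Hence for
   a composition g(u, v) whose inner series have leading monomials, a strictly
   smallest monomial of g (for the induced order) gives the leading monomial
   of g(u, v) with a nonzero coefficient (comp2_coef_leading).

   For l1 <= l <= alpha we then follow, by induction on n, the leading
   monomials of p^n (namely z^(delta^n)) and of Q^n, whose weight is
   delta^n r_n with r_0 = l and r_n = alpha for n >= 1; the leading monomial
   of q for the ratio r >= l1 is (g, 0), or (n1, m) when r = l1.  When delta = T, alpha = l1. *)

Lemma sum_neq0_witness (V : nmodType) (I : Type) (r : seq I) (P : pred I)
    (F : I -> V) :
  \sum_(i <- r | P i) F i != 0 -> exists i, P i /\ F i != 0.
Proof.
elim: r => [|i r IH]; first by rewrite big_nil eqxx.
rewrite big_cons; case: ifP => Pi; last exact: IH.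
by case: (eqVneq (F i) 0) => [->|nz _]; [rewrite add0r; exact: IH | exists i].
Qed.

Lemma sum_ord_single (V : nmodType) (n k : nat) (F : 'I_n -> V) (kn : (k < n)%N) :
  (forall i : 'I_n, i <> k :> nat -> F i = 0) -> \sum_(i < n) F i = F (Ordinal kn).
Proof.
move=> F0; rewrite (bigD1 (Ordinal kn)) //= big1 ?addr0 // => i /eqP ne.
by apply: F0 => ik; apply: ne; apply: val_inj.
Qed.

Lemma mul_neq0_factors (F : idomainType) (x y : F) : x * y != 0 -> x != 0 /\ y != 0.
Proof. by rewrite mulf_eq0 negb_or => /andP. Qed.

Lemma natr_inj (R : numDomainType) (m n : nat) : (m%:R : R) = n%:R -> m = n.
Proof. by move/eqP; rewrite eqr_nat => /eqP. Qed.

Lemma ex_least (P : nat -> Prop) n :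
  P n -> exists k, P k /\ forall k', P k' -> (k <= k')%N.
Proof.
move=> Pn; apply: NNPP => none.
suff: forall N k, (k <= N)%N -> ~ P k by move/(_ n n (leqnn n)).
elim=> [|N IH] k kN Pk; apply: none; exists k; split=> // k' Pk'.
  by rewrite leqNgt; apply/negP => lt; lia.
by rewrite leqNgt; apply/negP => lt; apply: (IH k' _ Pk'); lia.
Qed.

Section Coefficients.
Variable R : realType.
Local Notation C := (R[i]).
Local Notation poly2 := ({poly {poly C}}).

Lemma coef2_sum (I : Type) (r : seq I) (P : pred I) (F : I -> poly2) a b :
  coef2 (\sum_(i <- r | P i) F i) a b = \sum_(i <- r | P i) coef2 (F i) a b.
Proof. by rewrite /coef2 !coef_sum. Qed.

Lemma coef2M (P Q : poly2) a b :
  coef2 (P * Q) a b =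
    \sum_(j < b.+1) \sum_(i < a.+1) coef2 P i j * coef2 Q (a - i) (b - j).
Proof. by rewrite /coef2 coefM coef_sum; apply: eq_bigr => j _; rewrite coefM. Qed.

Lemma coef2CM (c : C) (P : poly2) a b : coef2 (c%:P%:P * P) a b = c * coef2 P a b.
Proof. by rewrite /coef2 !coefCM. Qed.

Lemma coef2_1 a b : coef2 (1 : poly2) a b = ((a == 0%N) && (b == 0%N))%:R.
Proof.
rewrite /coef2 coef1; case: (b == 0%N); rewrite ?coef1 ?andbT ?andbF //.
by rewrite coef0.
Qed.

Lemma coef2_trunc N (s : series2 R) a b :
  coef2 (trunc2 N s) a b = if (a <= N)%N && (b <= N)%N then s a b else 0.
Proof.
have monomial i j : coef2 ((s i j *: 'X^i)%:P * 'X^j) a b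
                    = s i j * ((a == i) && (b == j))%:R.
  rewrite /coef2 mul_polyC coefZ coefXn.
  by case: (b == j); rewrite ?andbF ?mulr0 ?coef0 ?andbT ?mulr1 // coefZ coefXn.
rewrite /trunc2 coef2_sum; under eq_bigr do rewrite coef2_sum.
case: ifP => [/andP [aN bN]|outN].
  have aN' : (a < N.+1)%N by []; have bN' : (b < N.+1)%N by [].
  rewrite (sum_ord_single aN') => [|i /eqP ne]; last first.
    by apply: big1 => j _; rewrite monomial eq_sym (negbTE ne) mulr0.
  rewrite (sum_ord_single bN') => [|j /eqP ne]; last first.
    by rewrite monomial eqxx eq_sym (negbTE ne) mulr0.
  by rewrite monomial !eqxx mulr1.
apply: big1 => i _; apply: big1 => j _; rewrite monomial.
case: eqP => [ai|]; case: eqP => [bj|] //=; rewrite ?mulr0 //; subst.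
by move: outN; have := ltn_ord i; have := ltn_ord j; rewrite !ltnS => -> ->.
Qed.

End Coefficients.

(* Monomials z^a w^b are compared through the pair (weight l a b, b): first by the
   l-weight a + l b, and among monomials of equal weight the one of larger
   w-degree counts as smaller.  [lex_ge x y X Y] says (x, y) is at least (X, Y). *)
Section MonomialOrder.
Variable R : realType.
Local Notation C := (R[i]).
Local Notation poly2 := ({poly {poly C}}).
Variable l : R.

Definition weight (a b : nat) : R := a%:R + l * b%:R.
Definition lex_ge (x y X Y : R) : Prop := X < x \/ (x = X /\ y <= Y).
Definition lex_gt (x y X Y : R) : Prop := X < x \/ (x = X /\ y < Y).

Definition above (s : series2 R) (X Y : R) : Prop :=
  forall a b, s a b != 0 -> lex_ge (weight a b) b%:R X Y.

Lemma weightD a b c d : weight (a + c) (b + d) = weight a b + weight c d.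
Proof. by rewrite /weight !natrD; ring. Qed.

Lemma weightM n a b : weight (n * a) (n * b) = n%:R * weight a b.
Proof. by rewrite /weight !natrM; ring. Qed.

Lemma weight_z a : weight a 0 = a%:R.
Proof. by rewrite /weight mulr0 addr0. Qed.

Lemma weight_inj a b c d : weight a b = weight c d -> b = d -> a = c.
Proof. by rewrite /weight => e bd; subst d; apply: (@natr_inj R); lra. Qed.

Lemma lex_ge_refl x y : lex_ge x y x y.
Proof. rewrite /lex_ge; lra. Qed.

Lemma lex_ge_of_le x y X Y : X <= x -> y <= Y -> lex_ge x y X Y.
Proof. rewrite /lex_ge; lra. Qed.

Lemma lex_gt_ge x y X Y : lex_gt x y X Y -> lex_ge x y X Y.
Proof. rewrite /lex_ge /lex_gt; lra. Qed.

Lemma lex_ge_trans x y X Y X' Y' : lex_ge x y X Y -> lex_ge X Y X' Y' -> lex_ge x y X' Y'.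
Proof. rewrite /lex_ge; lra. Qed.

Lemma lex_ge_gtF x y X Y : lex_ge x y X Y -> lex_gt X Y x y -> False.
Proof. rewrite /lex_ge /lex_gt; lra. Qed.

Lemma lex_geD x1 y1 X1 Y1 x2 y2 X2 Y2 :
  lex_ge x1 y1 X1 Y1 -> lex_ge x2 y2 X2 Y2 ->
  lex_ge (x1 + x2) (y1 + y2) (X1 + X2) (Y1 + Y2).
Proof. rewrite /lex_ge; lra. Qed.

Lemma lex_geD_eq x1 y1 X1 Y1 x2 y2 X2 Y2 :
  lex_ge x1 y1 X1 Y1 -> lex_ge x2 y2 X2 Y2 ->
  x1 + x2 = X1 + X2 -> y1 + y2 = Y1 + Y2 -> x1 = X1 /\ y1 = Y1.
Proof. rewrite /lex_ge; lra. Qed.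

Lemma above_weaken s X Y X' Y' : above s X Y -> lex_ge X Y X' Y' -> above s X' Y'.
Proof. by move=> sXY le a b nz; exact: lex_ge_trans (sXY a b nz) le. Qed.

Lemma above_trunc N s X Y : above s X Y -> above (coef2 (trunc2 N s)) X Y.
Proof. by move=> sXY a b; rewrite coef2_trunc; case: ifP => _; [exact: sXY | rewrite eqxx]. Qed.

Lemma above_scale c (P : poly2) X Y :
  above (coef2 P) X Y -> above (coef2 (c%:P%:P * P)) X Y.
Proof. by move=> PXY a b; rewrite coef2CM => /mul_neq0_factors [_]; exact: PXY. Qed.

Lemma above_sum (I : Type) (r : seq I) (Pr : pred I) (F : I -> poly2) X Y :
  (forall i, Pr i -> above (coef2 (F i)) X Y) ->
  above (coef2 (\sum_(i <- r | Pr i) F i)) X Y.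
Proof.
move=> FXY a b; rewrite coef2_sum => /sum_neq0_witness [i [Pi nz]].
exact: FXY nz.
Qed.

Lemma above_mul (P Q : poly2) X1 Y1 X2 Y2 :
  above (coef2 P) X1 Y1 -> above (coef2 Q) X2 Y2 ->
  above (coef2 (P * Q)) (X1 + X2) (Y1 + Y2).
Proof.
move=> PXY QXY a b; rewrite coef2M.
move=> /sum_neq0_witness [j [_ /sum_neq0_witness [i [_ nz]]]].
have [/(PXY _ _) Pij /(QXY _ _) Qij] := mul_neq0_factors nz.
have := lex_geD Pij Qij.
by rewrite -weightD -natrD !subnKC // -ltnS.
Qed.

Lemma above_exp (P : poly2) X Y n :
  above (coef2 P) X Y -> above (coef2 (P ^+ n)) (n%:R * X) (n%:R * Y).
Proof.
move=> PXY; elim: n => [|n IH].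
  move=> a b; rewrite expr0 coef2_1 !mul0r.
  case: (a =P 0%N) => [->|_]; case: (b =P 0%N) => [->|_] /=;
    rewrite ?andbF ?eqxx //= => _.
  by apply: lex_ge_of_le; rewrite // /weight mulr0n mulr0 addr0.
rewrite exprS -addn1 natrD !mulrDl !mul1r addrC [_ * Y + Y]addrC.
exact: above_mul.
Qed.

Lemma coef2M_leading (P Q : poly2) a1 b1 a2 b2 :
  above (coef2 P) (weight a1 b1) b1%:R -> above (coef2 Q) (weight a2 b2) b2%:R ->
  coef2 (P * Q) (a1 + a2) (b1 + b2) = coef2 P a1 b1 * coef2 Q a2 b2.
Proof.
move=> PXY QXY; rewrite coef2M.
have only_leading i j : (i <= a1 + a2)%N -> (j <= b1 + b2)%N ->
    coef2 P i j * coef2 Q (a1 + a2 - i) (b1 + b2 - j) != 0 -> i = a1 /\ j = b1.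
  move=> ia jb nz.
  have [/(PXY _ _) Pij /(QXY _ _) Qij] := mul_neq0_factors nz.
  have [ew /natr_inj eb] : weight i j = weight a1 b1 /\ (j%:R : R) = b1%:R.
    apply: (lex_geD_eq Pij Qij); first by rewrite -!weightD !subnKC.
    by rewrite -!natrD !subnKC.
  by split => //; exact: weight_inj ew eb.
have b1s : (b1 < (b1 + b2).+1)%N by rewrite ltnS leq_addr.
have a1s : (a1 < (a1 + a2).+1)%N by rewrite ltnS leq_addr.
rewrite (sum_ord_single b1s) => [|j ne]; last first.
  apply: big1 => i _; apply/eqP; apply: contraNT (introN eqP ne) => nz.
  by have [_ ->] := only_leading _ _ (ltn_ord i) (ltn_ord j) nz.
rewrite (sum_ord_single a1s) => [|i ne]; last first.
  apply/eqP; apply: contraNT (introN eqP ne) => nz.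
  by have [-> _] := only_leading _ _ (ltn_ord i) b1s nz.
by rewrite /= !addKn.
Qed.

Lemma coef2X_leading (P : poly2) a b n :
  above (coef2 P) (weight a b) b%:R -> coef2 (P ^+ n) (n * a) (n * b) = coef2 P a b ^+ n.
Proof.
move=> PXY; elim: n => [|n IH]; first by rewrite expr0 !mul0n coef2_1 expr0.
rewrite exprS !mulSn (coef2M_leading PXY) ?IH ?exprS //.
by have := above_exp (n := n) PXY; rewrite -weightM -natrM.
Qed.

Lemma above_wl_is (s : series2 R) a b :
  above s (weight a b) b%:R -> s a b != 0 -> wl_is s l (weight a b).
Proof.
move=> sab nz; split; first by exists a, b.
by move=> i j /sab; rewrite /lex_ge /weight; lra.
Qed.

End MonomialOrder.

(* Bounds for the composition g(u, v): a monomial z^i w^j of g contributes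
   u^i v^j, whose monomials are bounded by i (U1, U2) + j (V1, V2). *)
Section Composition.
Variable R : realType.
Variable l : R.

Lemma comp2_above (g u v : series2 R) U1 U2 V1 V2 X Y :
  above l u U1 U2 -> above l v V1 V2 ->
  (forall i j, g i j != 0 ->
     lex_ge (i%:R * U1 + j%:R * V1) (i%:R * U2 + j%:R * V2) X Y) ->
  above l (comp2 g u v) X Y.
Proof.
move=> uU vV gXY a b; apply: above_sum => i _; apply: above_sum => j _.
have [->|nz] := eqVneq (g i j) 0; first by move=> a' b'; rewrite coef2CM mul0r eqxx.
apply: above_scale; apply: (above_weaken _ (gXY _ _ nz)).
exact: above_mul (above_exp (above_trunc uU)) (above_exp (above_trunc vV)).
Qed.

Lemma comp2_coef_leading (g u v : series2 R) mu1 mu2 mv1 mv2 i0 j0 :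
  above l u (weight l mu1 mu2) mu2%:R -> above l v (weight l mv1 mv2) mv2%:R ->
  (0 < mu1 + mu2)%N -> (0 < mv1 + mv2)%N ->
  (forall i j, g i j != 0 -> (i, j) <> (i0, j0) ->
     lex_gt (i%:R * weight l mu1 mu2 + j%:R * weight l mv1 mv2)
            (i%:R * mu2%:R + j%:R * mv2%:R)
            (i0%:R * weight l mu1 mu2 + j0%:R * weight l mv1 mv2)
            (i0%:R * mu2%:R + j0%:R * mv2%:R)) ->
  comp2 g u v (i0 * mu1 + j0 * mv1)%N (i0 * mu2 + j0 * mv2)%N =
    g i0 j0 * u mu1 mu2 ^+ i0 * v mv1 mv2 ^+ j0.
Proof.
move=> uU vV pu pv g_min; rewrite /comp2.
set a := (i0 * mu1 + j0 * mv1)%N; set b := (i0 * mu2 + j0 * mv2)%N.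
set N := (a + b)%N.
have uN := above_trunc (N := N) uU; have vN := above_trunc (N := N) vV.
rewrite coef2_sum; under eq_bigr do rewrite coef2_sum.
have others_vanish i j : (i, j) <> (i0, j0) ->
    coef2 ((g i j)%:P%:P * (trunc2 N u ^+ i * trunc2 N v ^+ j)) a b = 0.
  move=> ne; rewrite coef2CM.
  have [->|nz] := eqVneq (g i j) 0; first by rewrite mul0r.
  apply/eqP; rewrite mulf_eq0 (negbTE nz) /=; apply: contraT => nzc; exfalso.
  apply: lex_ge_gtF (above_mul (above_exp (n := i) uN) (above_exp (n := j) vN) nzc) _.
  rewrite /a /b weightD !weightM natrD !natrM; exact: g_min.
have i0N : (i0 < N.+1)%N by rewrite ltnS /N /a /b; nia.
have j0N : (j0 < N.+1)%N by rewrite ltnS /N /a /b; nia.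
rewrite (sum_ord_single i0N) => [|i ne]; last first.
  by apply: big1 => j _; apply: others_vanish => -[].
rewrite (sum_ord_single j0N) => [|j ne]; last by apply: others_vanish => -[].
rewrite /= coef2CM /a /b (coef2M_leading (l := l)); last 2 first.
- by have := above_exp (n := i0) uN; rewrite -weightM -natrM.
- by have := above_exp (n := j0) vN; rewrite -weightM -natrM.
rewrite !(coef2X_leading (l := l)) // !coef2_trunc mulrA.
have keep k x y (w : R[i]) : ((0 < k)%N -> (x <= N)%N && (y <= N)%N) ->
    (if (x <= N)%N && (y <= N)%N then w else 0) ^+ k = w ^+ k.
  by have [->|_] := posnP k; rewrite ?expr0 // => /(_ isT) ->.
by rewrite (keep i0) ?(keep j0) // => k0; apply/andP; split; rewrite /N /a /b; nia.
Qed.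

End Composition.

Lemma sum_drop_weight (R : fieldType) (k : nat) (c X : 'I_k -> R) (t : 'I_k) (D : R) :
  \sum_(u < k) (c u - (u == t)%:R * c t) / D * X u =
  (\sum_(u < k) c u * X u - c t * X t) / D.
Proof.
rewrite [LHS](bigD1 t) //= [in RHS](bigD1 t) //= eqxx mul1r subrr !mul0r add0r.
rewrite addrAC subrr add0r mulr_suml; apply: eq_bigr => u /negbTE ->.
by rewrite mul0r subr0 mulrAC.
Qed.

Lemma sum_full_weight (R : realFieldType) (k : nat) (c X : 'I_k -> R) (t : 'I_k) :
  (forall u, 0 <= c u) -> \sum_(u < k) c u = 1 -> 1 <= c t ->
  \sum_(u < k) c u * X u = X t.
Proof.
move=> c0 c1 ct1; move: c1; rewrite (bigD1 t) //= => c1.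
have rest_ge0 : 0 <= \sum_(u < k | u != t) c u by apply: sumr_ge0 => u _; exact: c0.
have rest0 : \sum_(u < k | u != t) c u = 0 by lra.
have ct : c t = 1 by lra.
rewrite (bigD1 t) //= big1 => [|u /(psumr_eq0P (fun u _ => c0 u) rest0) ->].
  by rewrite ct mul1r addr0.
by rewrite mul0r.
Qed.

Section NewtonPolygon.
Variable R : realType.
Variable q : series2 R.

Lemma in_newton_support i j (x y : R) :
  q i j != 0 -> i%:R <= x -> j%:R <= y -> in_newton q x y.
Proof.
move=> nz ix jy; exists 1%N, (fun=> 1), (fun=> (i, j)).
by split; rewrite ?big_ord1 ?mul1r // => _; exact: ler01.
Qed.

Lemma in_newton_mono (x y x' y' : R) :
  in_newton q x y -> x <= x' -> y <= y' -> in_newton q x' y'.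
Proof.
move=> [k [c [pt [c0 c1 nz sx sy]]]] xx yy.
by exists k, c, pt; split => //; [exact: le_trans xx | exact: le_trans yy].
Qed.

Lemma in_newton_drop k (c : 'I_k -> R) (pt : 'I_k -> nat * nat) t :
  (forall u, 0 <= c u) -> \sum_(u < k) c u = 1 ->
  (forall u, q (pt u).1 (pt u).2 != 0) -> c t < 1 ->
  in_newton q ((\sum_(u < k) c u * ((pt u).1)%:R - c t * ((pt t).1)%:R) / (1 - c t))
              ((\sum_(u < k) c u * ((pt u).2)%:R - c t * ((pt t).2)%:R) / (1 - c t)).
Proof.
move=> c0 c1 nz ct1; have D0 : 0 < 1 - c t by rewrite subr_gt0.
exists k, (fun u => (c u - (u == t)%:R * c t) / (1 - c t)), pt.
split => //=; rewrite ?sum_drop_weight //.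
- move=> u; apply: divr_ge0; last exact: ltW.
  by case: eqP => [->|_]; rewrite ?mul1r ?subrr // mul0r subr0.
- under eq_bigr do rewrite -[_ / (1 - c t)]mulr1.
  rewrite (sum_drop_weight c (fun=> 1)); under eq_bigr do rewrite mulr1.
  by rewrite c1 mulr1 divff // lt0r_neq0.
Qed.

(* Every vertex of the Newton polygon is a point of the support of q: the
   barycentre of a representation of a vertex must be the vertex itself, and
   splitting off a point of positive weight exhibits the vertex as a proper
   combination of that support point and another point of N(q). *)
Lemma vertex_support (x y : R) :
  newton_vertex q x y -> exists i j, [/\ q i j != 0, x = i%:R & y = j%:R].
Proof.
move=> [[k [c [pt [c0 c1 nz sx sy]]]] ext].
set Sx := \sum_(u < k) _ in sx; set Sy := \sum_(u < k) _ in sy.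
have inS : in_newton q Sx Sy by exists k, c, pt.
have half : 0 < (2^-1 : R) < 1 by apply/andP; split; lra.
have eSx : Sx = x.
  have [|||] := ext Sx y (2 * x - Sx) y 2^-1 (in_newton_mono inS (lexx _) sy)
                   (in_newton_mono inS _ sy) half; lra.
have eSy : Sy = y.
  have [|||] := ext x Sy x (2 * y - Sy) 2^-1 (in_newton_mono inS sx (lexx _))
                   (in_newton_mono inS sx _) half; lra.
have /sum_neq0_witness [t [_ ct0]] : \sum_(u < k) c u != 0 by rewrite c1 oner_neq0.
have ct_gt0 : 0 < c t by rewrite lt0r ct0 c0.
exists (pt t).1, (pt t).2; rewrite -eSx -eSy.
have [ct1|ct1] := ltP (c t) 1; last by rewrite /Sx /Sy !(sum_full_weight _ c0 c1 ct1).
have D0 : 1 - c t != 0 by rewrite subr_eq0 eq_sym lt_eqF.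
have ct_in : 0 < c t < 1 by rewrite ct_gt0 ct1.
have ex : x = c t * (pt t).1%:R + (1 - c t) * ((Sx - c t * (pt t).1%:R) / (1 - c t)).
  by rewrite -eSx; field.
have ey : y = c t * (pt t).2%:R + (1 - c t) * ((Sy - c t * (pt t).2%:R) / (1 - c t)).
  by rewrite -eSy; field.
have [xt yt] := ext _ _ _ _ _ (in_newton_support (nz t) (lexx _) (lexx _))
                  (in_newton_drop c0 c1 nz ct1) ct_in ex ey.
have xt' := congr1 ( *%R^~ (1 - c t)) xt; have yt' := congr1 ( *%R^~ (1 - c t)) yt.
rewrite /= mulfVK // -/Sx -/Sy in xt' yt'.
by split => //; nra.
Qed.
End NewtonPolygon.

Section NewtonPolygonFaces.
Variable R : realType.
Variable q : series2 R.

Lemma in_newton_linear_bound (a b G x y : R) :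
  0 <= a -> 0 <= b -> (forall i j, q i j != 0 -> G <= a * i%:R + b * j%:R) ->
  in_newton q x y -> G <= a * x + b * y.
Proof.
move=> a0 b0 bound [k [c [pt [c0 c1 nz sx sy]]]].
have lin : \sum_(t < k) c t * (a * ((pt t).1)%:R + b * ((pt t).2)%:R) =
    a * \sum_(t < k) c t * ((pt t).1)%:R + b * \sum_(t < k) c t * ((pt t).2)%:R.
  by rewrite !mulr_sumr -big_split /=; apply: eq_bigr => t _; ring.
have : G <= \sum_(t < k) c t * (a * ((pt t).1)%:R + b * ((pt t).2)%:R).
  rewrite -[G]mul1r -{1}c1 mulr_suml; apply: ler_sum => t _.
  by apply: ler_wpM2l; [exact: c0 | exact: bound (nz t)].
rewrite lin => le; apply: (le_trans le).
by apply: lerD; apply: ler_wpM2l.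
Qed.

Definition strict_minimiser (a b : R) (i0 j0 : nat) : Prop :=
  q i0 j0 != 0 /\
  forall i j, q i j != 0 -> (i, j) <> (i0, j0) ->
    a * i0%:R + b * j0%:R < a * i%:R + b * j%:R.

Lemma strict_minimiser_unique (a b : R) i0 j0 x y :
  0 < a -> 0 < b -> strict_minimiser a b i0 j0 ->
  in_newton q x y -> a * x + b * y <= a * i0%:R + b * j0%:R ->
  x = i0%:R /\ y = j0%:R.
Proof.
move=> a0 b0 [nz0 smin] [k [c [pt [c0 c1 nz sx sy]]]] le0.
set G0 := a * i0%:R + b * j0%:R in le0 smin.
set F := fun t : 'I_k => a * ((pt t).1)%:R + b * ((pt t).2)%:R.
have F_ge t : G0 <= F t.
  rewrite /F; case: (pair_eqP (pt t) (i0, j0)) => [-> //|ne].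
  by apply/ltW/smin; rewrite -?surjective_pairing.
have term_ge0 t : 0 <= c t * (F t - G0) by rewrite mulr_ge0 ?subr_ge0.
have gap_ge0 : 0 <= \sum_(t < k) c t * (F t - G0) by apply: sumr_ge0 => t _.
have gap_eq : \sum_(t < k) c t * (F t - G0) =
    a * \sum_(t < k) c t * ((pt t).1)%:R + b * \sum_(t < k) c t * ((pt t).2)%:R - G0.
  have sG0 : \sum_(t < k) c t * G0 = G0 by rewrite -mulr_suml c1 mul1r.
  rewrite -[G0 in RHS]sG0 !mulr_sumr -big_split -sumrB /=.
  by apply: eq_bigr => t _; rewrite /F; ring.
have gap0 : \sum_(t < k) c t * (F t - G0) = 0.
  have : a * \sum_(t < k) c t * ((pt t).1)%:R <= a * x by apply: ler_wpM2l; [exact: ltW|].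
  have : b * \sum_(t < k) c t * ((pt t).2)%:R <= b * y by apply: ler_wpM2l; [exact: ltW|].
  rewrite gap_eq in gap_ge0 *; lra.
have at_min t : c t != 0 -> pt t = (i0, j0).
  move=> ct; have := psumr_eq0P (fun t _ => term_ge0 t) gap0 (i := t) isT.
  move/eqP; rewrite mulf_eq0 (negbTE ct) subr_eq0 /F /=.
  case: (pair_eqP (pt t) (i0, j0)) => [-> //|ne /eqP eqF].
  by have := smin _ _ (nz t); rewrite -surjective_pairing eqF ltxx => /(_ ne).
have bary (X : nat * nat -> nat) : \sum_(t < k) c t * (X (pt t))%:R = (X (i0, j0))%:R.
  transitivity (\sum_(t < k) c t * (X (i0, j0))%:R); last first.
    by rewrite -mulr_suml c1 mul1r.
  apply: eq_bigr => t _.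
  by have [->|/at_min ->] := eqVneq (c t) 0; rewrite ?mul0r.
have := bary fst; have := bary snd => /= Sy Sx; rewrite Sx in sx; rewrite Sy in sy.
have ax : a * i0%:R <= a * x by apply: ler_wpM2l; [exact: ltW|].
have bY : b * j0%:R <= b * y by apply: ler_wpM2l; [exact: ltW|].
move: le0; rewrite /G0 => le0.
have ex : a * x = a * i0%:R by lra.
have ey : b * y = b * j0%:R by lra.
by split; [apply: (mulfI (lt0r_neq0 a0)) | apply: (mulfI (lt0r_neq0 b0))].
Qed.

Lemma strict_minimiser_vertex (a b : R) i0 j0 :
  0 < a -> 0 < b -> strict_minimiser a b i0 j0 -> newton_vertex q i0%:R j0%:R.
Proof.
move=> a0 b0 smin; have [nz0 lt0] := smin.
set G0 := a * i0%:R + b * j0%:R.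
have bound i j : q i j != 0 -> G0 <= a * i%:R + b * j%:R.
  move=> nz; case: (pair_eqP (i, j) (i0, j0)) => [[-> ->]|ne] //.
  exact/ltW/lt0.
split; first exact: in_newton_support nz0 (lexx _) (lexx _).
move=> x1 y1 x2 y2 t in1 in2 /andP [t0 t1] ex ey.
have g1 := in_newton_linear_bound (ltW a0) (ltW b0) bound in1.
have g2 := in_newton_linear_bound (ltW a0) (ltW b0) bound in2.
have split_form : G0 = t * (a * x1 + b * y1) + (1 - t) * (a * x2 + b * y2).
  by rewrite /G0 ex ey; ring.
have e1 : a * x1 + b * y1 <= G0 by nra.
have e2 : a * x2 + b * y2 <= G0 by nra.
have [-> ->] := strict_minimiser_unique a0 b0 smin in1 e1.
by have [-> ->] := strict_minimiser_unique a0 b0 smin in2 e2.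
Qed.

(* If some support point lies strictly below the line a i + b j = c (a > 0),
   then so does some vertex: take the support points minimising a i + b j,
   and among them the one of least j; it strictly minimises the slightly
   tilted form (j + 1)(a i + b j) + j. *)
Lemma exists_vertex_below (a b c : nat) :
  (0 < a)%N -> (exists i j, q i j != 0 /\ (a * i + b * j < c)%N) ->
  exists i j, newton_vertex q i%:R j%:R /\ (a * i + b * j < c)%N.
Proof.
move=> a0 [i [j [nz below]]].
pose F i j := (a * i + b * j)%N.
have [Fm [[i1 [j1 [nz1 e1]]] minF]] :=
  @ex_least (fun k => exists i j, q i j != 0 /\ F i j = k) (F i j)
            (ex_intro _ i (ex_intro _ j (conj nz erefl))).
have [jM [[iM [nzM eM]] minJ]] :=
  @ex_least (fun jj => exists ii, q ii jj != 0 /\ F ii jj = Fm) j1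
            (ex_intro _ i1 (conj nz1 e1)).
have FmF : (Fm <= F i j)%N by apply: minF; exists i, j.
exists iM, jM; split; last by rewrite -/(F iM jM) eM; exact: leq_ltn_trans FmF below.
apply: (@strict_minimiser_vertex ((jM.+1 * a)%:R) ((jM.+1 * b + 1)%:R)).
- by rewrite ltr0n muln_gt0 a0.
- by rewrite ltr0n addn1.
split=> // i' j' nz' ne; rewrite -!natrM -!natrD ltr_nat.
have tilt x y : (jM.+1 * a * x + (jM.+1 * b + 1) * y = jM.+1 * F x y + y)%N.
  by rewrite /F; nia.
rewrite !tilt eM.
have : (Fm <= F i' j')%N by apply: minF; exists i', j'.
rewrite leq_eqVlt => /orP [/eqP eF|ltF]; last by nia.
have : (jM <= j')%N by apply: minJ; exists i'.
rewrite leq_eqVlt => /orP [/eqP ej|ltj]; last by lia.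
exfalso; apply: ne; subst j'.
have : (a * i' = a * iM)%N by move: eF eM; rewrite /F; lia.
by move/eqP; rewrite eqn_mul2l (negbTE (lt0n_neq0 a0)) /= => /eqP ->.
Qed.

(* Let (n1, m) be a vertex with m > 0 and (g, 0) a point of N(q), n1 < g.  No
   support point (i, j) with j > m lies on or below the line through them:
   otherwise (n1, m) would be a proper convex combination of (g, 0) and a
   point of the quadrant above (i, j). *)
Lemma no_support_above_edge (g n1 m i j : nat) :
  (0 < m)%N -> (n1 < g)%N -> newton_vertex q n1%:R m%:R -> in_newton q g%:R 0 ->
  q i j != 0 -> (m < j)%N -> (m * i + (g - n1) * j <= m * g)%N -> False.
Proof.
move=> m0 ng [_ ext] ing nz mj below.
have below' : m%:R * i%:R + (g%:R - n1%:R) * j%:R <= m%:R * g%:R :> R.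
  by rewrite -natrB ?(ltnW ng) // -!natrM -natrD ler_nat.
have M0 : (0 : R) < m%:R by rewrite ltr0n.
have MJ : (m%:R : R) < j%:R by rewrite ltr_nat.
set x1 : R := (j%:R * n1%:R - (j%:R - m%:R) * g%:R) / m%:R.
set t : R := m%:R / j%:R.
have in1 : in_newton q x1 j%:R.
  by apply: (in_newton_support nz) => //; rewrite /x1 ler_pdivlMr //; nra.
have t01 : 0 < t < 1.
  by apply/andP; split; [apply: divr_gt0; lra | rewrite /t ltr_pdivrMr ?mul1r //; lra].
have ex : (n1%:R : R) = t * x1 + (1 - t) * g%:R.
  by rewrite /t /x1; field; apply/andP; split; lra.
have ey : (m%:R : R) = t * j%:R + (1 - t) * 0 by rewrite /t; field; lra.
by have [_] := ext _ _ _ _ _ in1 ing t01 ex ey; lra.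
Qed.

End NewtonPolygonFaces.

Lemma sorted_nth_lt (T : Type) (x0 : T) (r : rel T) (s : seq T) i j :
  transitive r -> sorted r s -> (i < j)%N -> (j < size s)%N -> r (nth x0 s i) (nth x0 s j).
Proof.
move=> tr srt ij js; apply: (sorted_ltn_nth tr) => //; rewrite inE //.
exact: ltn_trans ij js.
Qed.

Section LastEdge.
Variable R : realType.
Variable q : series2 R.
Variable vs : seq (nat * nat).
Hypothesis vs_vertices : forall x y : R,
  newton_vertex q x y <-> exists2 v, v \in vs & x = (v.1)%:R /\ y = (v.2)%:R.
Hypothesis vs_sorted : sorted (fun a b => (b.2 < a.2)%N) vs.
Variables g n1 m k : nat.
Hypothesis vs_size : size vs = k.+2.
Hypothesis last_vertex : nth (0%N, 0%N) vs k.+1 = (g, 0%N).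
Hypothesis prev_vertex : nth (0%N, 0%N) vs k = (n1, m).
Hypothesis m_gt0 : (0 < m)%N.
Hypothesis n1_lt_g : (n1 < g)%N.

Lemma listed_vertex_support v : v \in vs -> q v.1 v.2 != 0.
Proof.
move=> vin; have V : newton_vertex q v.1%:R v.2%:R by apply/vs_vertices; exists v.
have [i [j [nz ei ej]]] := vertex_support V.
by rewrite (natr_inj ei) (natr_inj ej).
Qed.

Lemma last_vertex_support : q g 0%N != 0.
Proof.
have := @listed_vertex_support (nth (0%N, 0%N) vs k.+1).
by rewrite last_vertex; apply; rewrite -last_vertex mem_nth // vs_size.
Qed.

Lemma prev_vertex_support : q n1 m != 0.
Proof.
have := @listed_vertex_support (nth (0%N, 0%N) vs k).
by rewrite prev_vertex; apply; rewrite -prev_vertex mem_nth // vs_size.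
Qed.

Lemma prev_is_vertex : newton_vertex q n1%:R m%:R.
Proof. by apply/vs_vertices; exists (n1, m) => //; rewrite -prev_vertex mem_nth // vs_size. Qed.

Lemma last_in_newton : in_newton q g%:R 0.
Proof. exact: in_newton_support last_vertex_support (lexx _) (lexx _). Qed.

Lemma edge_height_bound i j :
  q i j != 0 -> (m * i + (g - n1) * j <= m * g)%N -> (j <= m)%N.
Proof.
move=> nz below; rewrite leqNgt; apply/negP => mj.
exact: no_support_above_edge m_gt0 n1_lt_g prev_is_vertex last_in_newton nz mj below.
Qed.

(* The whole support lies on or above the line of the last edge: otherwise
   some vertex lies strictly below it, and no listed vertex does. *)
Lemma support_above_last_edge i j :
  q i j != 0 -> (m * g <= m * i + (g - n1) * j)%N.
Proof.
move=> nz; rewrite leqNgt; apply/negP => below.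
have [iM [jM [V belowM]]] := exists_vertex_below m_gt0 (ex_intro _ i (ex_intro _ j (conj nz below))).
have [v vin [/natr_inj ei /natr_inj ej]] := (vs_vertices _ _).1 V.
have [kv kvs ev] := nthP (0%N, 0%N) vin.
have nzM : q iM jM != 0 by rewrite ei ej; exact: listed_vertex_support.
have tr : transitive (fun a b : nat * nat => (b.2 < a.2)%N).
  by move=> y x z /= h1 h2; exact: ltn_trans h2 h1.
move: kvs; rewrite vs_size ltnS leq_eqVlt => /orP [/eqP kl|].
  by move: ev belowM; rewrite kl last_vertex ei ej => <- /=; lia.
rewrite ltnS leq_eqVlt => /orP [/eqP kp|kp].
  move: ev belowM; rewrite kp prev_vertex ei ej => <- /=.
  by rewrite [((g - n1) * m)%N]mulnC -mulnDr subnKC ?ltnn // ltnW.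
have := sorted_nth_lt (0%N, 0%N) tr vs_sorted kp; rewrite vs_size prev_vertex ev /=.
move=> /(_ (leqW (ltnSn k))) mj; rewrite -ej in mj.
exact: no_support_above_edge m_gt0 n1_lt_g prev_is_vertex last_in_newton nzM mj (ltnW belowM).
Qed.

End LastEdge.

Lemma last_edge_weights (R : realType) (q : series2 R) (g n1 m : nat) :
  (0 < m)%N -> (n1 < g)%N ->
  (forall i j, q i j != 0 -> (m * g <= m * i + (g - n1) * j)%N) ->
  (forall i j, q i j != 0 -> (m * i + (g - n1) * j <= m * g)%N -> (j <= m)%N) ->
  let l1 : R := (g%:R - n1%:R) / m%:R in
  [/\ forall i j, q i j != 0 -> g%:R <= weight l1 i j,
      forall i j, q i j != 0 -> weight l1 i j = g%:R -> (j <= m)%N &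
      weight l1 n1 m = g%:R].
Proof.
move=> m0 n1g above_edge height l1.
have M0 : (0 : R) < m%:R by rewrite ltr0n.
have scaled i j : m%:R * weight l1 i j = (m * i + (g - n1) * j)%:R.
  rewrite /weight /l1 natrD !natrM natrB ?(ltnW n1g) //; field; lra.
split.
- by move=> i j nz; rewrite -(ler_pM2l M0) scaled -natrM ler_nat; exact: above_edge.
- by move=> i j nz e; apply: height nz _; rewrite -(ler_nat R) -scaled e natrM.
- by rewrite /weight /l1; field; lra.
Qed.

Section Iteration.
Variable R : realType.
Variables (p : series1 R) (q : series2 R) (delta g n1 m : nat) (l1 l alpha : R).
Hypothesis delta_gt0 : (0 < delta)%N.
Hypothesis p_low : forall i, (i < delta)%N -> p i = 0.
Hypothesis p_lead : p delta != 0.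
Hypothesis q_above_edge : forall i j, q i j != 0 -> g%:R <= weight l1 i j.
Hypothesis q_edge_height : forall i j, q i j != 0 -> weight l1 i j = g%:R -> (j <= m)%N.
Hypothesis q_end : q g 0%N != 0.
Hypothesis q_start : q n1 m != 0.
Hypothesis edge_start : weight l1 n1 m = g%:R.
Hypothesis m_gt0 : (0 < m)%N.
Hypothesis g_gt0 : (0 < g)%N.
Hypothesis l1_le_l : l1 <= l.
Hypothesis l_le_alpha : l <= alpha.
Hypothesis alpha_delta : alpha * delta%:R = g%:R.

(* The leading monomial of q for the weight r >= l1, ties in weight being
   broken by a positive multiple D of the w-degree: for r > l1 it is (g, 0),
   for r = l1 it is the top end (n1, m) of the edge. *)
Lemma q_leading (r D : R) : l1 <= r -> (r = l1 -> 0 < D) ->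
  exists i0 j0, [/\ q i0 j0 != 0, weight r i0 j0 = g%:R, (r = l1 -> (0 < j0)%N) &
    forall i j, q i j != 0 -> (i, j) <> (i0, j0) ->
      g%:R < weight r i j \/ (weight r i j = g%:R /\ j%:R * D < j0%:R * D)].
Proof.
move=> l1r rD; have [erl|nrl] := eqVneq r l1.
  subst r; exists n1, m; split => // i j nz ne.
  have [lt|le] := ltrP g%:R (weight l1 i j); first by left.
  have e : weight l1 i j = g%:R by have := q_above_edge nz; lra.
  right; split => //.
  have jm : (j < m)%N.
    rewrite ltn_neqAle (q_edge_height nz e) andbT; apply/eqP => ej; subst j.
    by apply: ne; rewrite (weight_inj (etrans e (esym edge_start)) erefl).
  by rewrite ltr_pM2r ?ltr_nat //; exact: rD.
have rl : l1 < r by rewrite lt_neqAle eq_sym nrl l1r.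
exists g, 0%N; split => //; first by rewrite weight_z.
  by move=> e; move: nrl; rewrite e eqxx.
move=> i j nz ne; left; have := q_above_edge nz; rewrite /weight.
have [j0|jp] := posnP j.
  subst j; rewrite !mulr0 !addr0 => le; rewrite lt_neqAle le andbT.
  by apply/eqP => /natr_inj e; apply: ne; rewrite e.
have jpos : (0 : R) < j%:R by rewrite ltr0n.
nra.
Qed.

Lemma alpha_gt0 : 0 < alpha.
Proof.
have : (0 : R) < g%:R by rewrite ltr0n.
have : (0 : R) < delta%:R by rewrite ltr0n.
rewrite -alpha_delta; nra.
Qed.

(* Invariant of the iteration: the first component P is bounded below by its
   monomial z^D, and the second component Q by one of its monomials z^A w^B,
   of l-weight D r (r is the ratio w_l(Q) / w_l(P)). *)
Definition leading_P (D : nat) (P : series2 R) : Prop :=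
  above l P (weight l D 0) 0%:R /\ P D 0%N != 0.

Definition leading_Q (D : nat) (r : R) (Q : series2 R) : Prop :=
  exists A B, [/\ above l Q (weight l A B) B%:R, Q A B != 0, (0 < A + B)%N,
                 weight l A B = D%:R * r & (r = l1 -> (0 < B)%N)].

Lemma leading_id : leading_P 1 (Zser R) /\ leading_Q 1 l (Wser R).
Proof.
split; first split.
- move=> a b; rewrite /Zser; case: (a =P 1%N) => [->|]; case: (b =P 0%N) => [->|] //=;
    rewrite ?eqxx ?andbF ?andbT //= => _; exact: lex_ge_refl.
- by rewrite /Zser !eqxx oner_neq0.
exists 0%N, 1%N; split => //.
- move=> a b; rewrite /Wser; case: (a =P 0%N) => [->|]; case: (b =P 1%N) => [->|] //=;
    rewrite ?eqxx ?andbF ?andbT //= => _; exact: lex_ge_refl.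
- by rewrite /Wser !eqxx oner_neq0.
- by rewrite /weight mul1r add0r mulr1.
Qed.

Lemma ser1to2_support i j : ser1to2 p i j != 0 -> j = 0%N /\ (delta <= i)%N.
Proof.
rewrite /ser1to2; case: (j =P 0%N) => [-> nz|]; last by rewrite eqxx.
by split => //; rewrite leqNgt; apply: contraNN nz => /p_low ->.
Qed.

Lemma leading_P_step (D : nat) (r : R) (P Q : series2 R) :
  (0 < D)%N -> leading_P D P -> leading_Q D r Q ->
  leading_P (D * delta) (comp2 (ser1to2 p) P Q).
Proof.
move=> D0 [PD PD0] [A [B [QAB _ AB0 _ _]]].
have D0' : (0 < D + 0)%N by rewrite addn0.
split.
- apply: (comp2_above PD QAB) => i j /ser1to2_support [-> di].
  apply: lex_ge_of_le; last by rewrite !mulr0n ?mulr0 ?mul0r ?addr0.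
  by rewrite !weight_z mul0r addr0 -natrM ler_nat; nia.
- have := comp2_coef_leading (g := ser1to2 p) (i0 := delta) (j0 := 0%N) PD QAB D0' AB0.
  rewrite !mul0n !addn0 muln0 mulnC => ->.
    by rewrite expr0 mulr1 mulf_neq0 ?expf_neq0 // /ser1to2 eqxx.
  move=> i j /ser1to2_support [ej di] ne; subst j; left.
  rewrite !mul0r !addr0 weight_z ltr_pM2r ?ltr0n // ltr_nat ltn_neqAle di andbT.
  by apply/eqP => e; apply: ne; rewrite e.
Qed.

(* Composing with q: the leading monomial (i0, j0) of q for the ratio r turns
   the leading monomials of P and Q into one of weight D g = (D delta) alpha. *)
Lemma leading_Q_step (D : nat) (r : R) (P Q : series2 R) :
  (0 < D)%N -> l1 <= r <= alpha -> leading_P D P -> leading_Q D r Q ->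
  leading_Q (D * delta) alpha (comp2 q P Q).
Proof.
move=> D0 /andP [l1r ralpha] [PD PD0] [A [B [QAB QAB0 AB0 wAB rB]]].
have D0' : (0 < D + 0)%N by rewrite addn0.
have combo i j : i%:R * weight l D 0 + j%:R * weight l A B = D%:R * weight r i j.
  by rewrite weight_z wAB /weight; ring.
have rD : r = l1 -> (0 : R) < B%:R by move=> e; rewrite ltr0n; exact: rB e.
have [i0 [j0 [q0 wq0 j0_pos q_min]]] := q_leading l1r rD.
have strict i j : q i j != 0 -> (i, j) <> (i0, j0) ->
    lex_gt (i%:R * weight l D 0 + j%:R * weight l A B) (i%:R * 0%:R + j%:R * B%:R)
           (i0%:R * weight l D 0 + j0%:R * weight l A B) (i0%:R * 0%:R + j0%:R * B%:R).
  move=> nz ne; rewrite !combo wq0 !mulr0 !add0r.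
  case: (q_min _ _ nz ne) => [lt | [e lt]]; first by left; rewrite ltr_pM2l ?ltr0n.
  by right; rewrite e.
have w_lead : weight l (i0 * D + j0 * A) (i0 * 0 + j0 * B) = (D * delta)%:R * alpha.
  by rewrite weightD !weightM combo wq0 natrM -alpha_delta; ring.
exists (i0 * D + j0 * A)%N, (i0 * 0 + j0 * B)%N; split => //.
- apply: (comp2_above PD QAB) => i j nz; rewrite weightD !weightM natrD !natrM.
  have [[-> ->]|ne] := pair_eqP (i, j) (i0, j0); first exact: lex_ge_refl.
  exact: lex_gt_ge (strict _ _ nz ne).
- by rewrite (comp2_coef_leading PD QAB D0' AB0 strict) !mulf_neq0 ?expf_neq0.
- rewrite lt0n; apply/eqP => e.
  move: w_lead; have [-> ->] : (i0 * D + j0 * A = 0 /\ i0 * 0 + j0 * B = 0)%N by lia.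
  rewrite /weight !mulr0n mulr0 addr0 => /esym/eqP.
  by rewrite mulf_eq0 (gt_eqF alpha_gt0) orbF pnatr_eq0 muln_eq0 (gtn_eqF D0) (gtn_eqF delta_gt0).
- move=> e; rewrite muln0 add0n muln_gt0 j0_pos ?rB //; lra.
Qed.

Lemma leading_iter n :
  leading_P (delta ^ n) (skew_iter p q n).1 /\
  leading_Q (delta ^ n) (if n is 0%N then l else alpha) (skew_iter p q n).2.
Proof.
elim: n => [|n [IP IQ]]; first exact: leading_id.
have Dn : (0 < delta ^ n)%N by rewrite expn_gt0 delta_gt0.
have ratio : l1 <= (if n is 0%N then l else alpha) <= alpha.
  by case: n {IP IQ Dn} => [|n]; rewrite ?l1_le_l ?l_le_alpha ?lexx ?andbT //; exact: le_trans l_le_alpha.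
rewrite expnSr; split; [exact: leading_P_step Dn IP IQ | exact: leading_Q_step Dn ratio IP IQ].
Qed.

Lemma wl_Qiter n : (1 <= n)%N -> wl_is (Qiter p q n) l (g * delta ^ n.-1)%:R.
Proof.
case: n => [//|n] _; have [_ [A [B [QAB QAB0 _ wAB _]]]] := leading_iter n.+1.
have -> : (g * delta ^ n)%:R = weight l A B.
  by rewrite wAB expnSr !natrM -alpha_delta; ring.
exact: above_wl_is QAB QAB0.
Qed.

End Iteration.

Lemma last_edge_of_vertices (R : realType) (q : series2 R) (vs : seq (nat * nat)) :
  (forall x y : R, newton_vertex q x y <->
      exists2 v, v \in vs & x = (v.1)%:R /\ y = (v.2)%:R) ->
  sorted (fun a b => (a.1 < b.1)%N) vs ->
  sorted (fun a b => (b.2 < a.2)%N) vs ->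
  (1 < size vs)%N -> (nth (0%N, 0%N) vs (size vs).-1).2 = 0%N ->
  let g := (nth (0%N, 0%N) vs (size vs).-1).1 in
  let n1 := (nth (0%N, 0%N) vs (size vs).-2).1 in
  let m := (nth (0%N, 0%N) vs (size vs).-2).2 in
  [/\ (0 < m)%N, (n1 < g)%N, q g 0%N != 0, q n1 m != 0 &
      (forall i j, q i j != 0 -> (m * g <= m * i + (g - n1) * j)%N) /\
      (forall i j, q i j != 0 -> (m * i + (g - n1) * j <= m * g)%N -> (j <= m)%N)].
Proof.
move=> vs_vertices sorted1 sorted2 s1 ms0.
have [k sz] : exists k, size vs = k.+2 by exists (size vs).-2; case: (size vs) s1 => [|[|]].
rewrite sz /= in ms0 *.
set g := (nth _ vs k.+1).1; set n1 := (nth _ vs k).1; set m := (nth _ vs k).2.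
have tr1 : transitive (fun a b : nat * nat => (a.1 < b.1)%N).
  by move=> y x z /= h1 h2; exact: ltn_trans h1 h2.
have tr2 : transitive (fun a b : nat * nat => (b.2 < a.2)%N).
  by move=> y x z /= h1 h2; exact: ltn_trans h2 h1.
have n1g : (n1 < g)%N by apply: (sorted_nth_lt _ tr1 sorted1 (ltnSn k)); rewrite sz.
have m0 : (0 < m)%N.
  by rewrite -ms0; apply: (sorted_nth_lt _ tr2 sorted2 (ltnSn k)); rewrite sz.
have last_v : nth (0%N, 0%N) vs k.+1 = (g, 0%N) by rewrite [LHS]surjective_pairing ms0.
have prev_v : nth (0%N, 0%N) vs k = (n1, m) by rewrite -surjective_pairing.
split => //.
- by move: (last_vertex_support vs_vertices sz last_v).
- by move: (prev_vertex_support vs_vertices sz prev_v).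
split.
- by move: (support_above_last_edge vs_vertices sorted2 sz last_v prev_v m0 n1g).
- by move: (edge_height_bound vs_vertices sz last_v prev_v m0 n1g).
Qed.

Lemma gamma_n_d0 gamma delta n : (1 <= n)%N -> gamma_n gamma delta 0 n = (gamma * delta ^ n.-1)%N.
Proof.
case: n => [//|n] _; rewrite /gamma_n big_ord_recl /= subn0 expn0 muln1.
by rewrite big1 ?addn0 // => k _; rewrite expnS mul0n muln0.
Qed.

Lemma alpha_eq_l1 (R : realType) (g n1 m delta : nat) :
  (0 < m)%N -> (n1 < g)%N ->
  delta%:R = m%:R + n1%:R * m%:R / (g%:R - n1%:R) :> R ->
  g%:R / delta%:R = (g%:R - n1%:R) / m%:R :> R.
Proof.
move=> m0 n1g ->.
have gn : g%:R - n1%:R != 0 :> R by rewrite subr_eq0 eqr_nat gtn_eqF.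
have hm : m%:R != 0 :> R by rewrite pnatr_eq0 -lt0n.
have hg : g%:R != 0 :> R by rewrite pnatr_eq0 -lt0n (leq_ltn_trans _ n1g).
have hmg : m%:R * (g%:R - n1%:R) + n1%:R * m%:R != 0 :> R.
  by rewrite [n1%:R * _]mulrC -mulrDr subrK mulf_neq0.
by field; rewrite hm gn hmg.
Qed.

Unset Implicit Arguments.
Set Strict Implicit.

Theorem theorem4p1 (R : realType) (p : series1 R) (q : series2 R)
    (delta : nat) (vs : seq (nat * nat)) :
  (* p(z) = a_delta z^delta + O(z^(delta+1)), a_delta <> 0, delta >= 1, p holomorphic *)
  (1 <= delta)%N ->
  (forall i, (i < delta)%N -> p i = 0) ->
  p delta != 0 ->
  convergent1 p ->
  (* q(z,w) = sum_{i+j>=1} b_ij z^i w^j holomorphic, not identically zero *)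
  q 0%N 0%N = 0 ->
  convergent2 q ->
  (exists i j, q i j != 0) ->
  (* vs = [(n_1,m_1); ...; (n_s,m_s)] lists the vertices of N(q) *)
  (forall x y : R, newton_vertex q x y <->
      exists2 v, v \in vs & x = (v.1)%:R /\ y = (v.2)%:R) ->
  sorted (fun a b => (a.1 < b.1)%N) vs ->
  sorted (fun a b => (b.2 < a.2)%N) vs ->
  let s := size vs in
  let n_s := (nth (0%N, 0%N) vs s.-1).1 in
  let m_s := (nth (0%N, 0%N) vs s.-1).2 in
  let n_s1 := (nth (0%N, 0%N) vs s.-2).1 in
  let m_s1 := (nth (0%N, 0%N) vs s.-2).2 in
  (* T_{s-1}: y-intercept of the line through (n_{s-1},m_{s-1}), (n_s,m_s) *)
  let T := m_s1%:R + n_s1%:R * (m_s1%:R - m_s%:R) / (n_s%:R - n_s1%:R) : R in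
  let gamma := n_s in
  let d := m_s in
  let l1 := (n_s%:R - n_s1%:R) / (m_s1%:R - m_s%:R) : R in
  let alpha := gamma%:R / (delta%:R - d%:R) : R in
  (* Case 2 *)
  (1 < s)%N ->
  delta%:R <= T ->
  (* d = 0 *)
  d = 0%N ->
  (d < delta)%N /\
  (forall l : R, l1 <= l <= alpha -> forall n : nat, (1 <= n)%N ->
     wl_is (Qiter p q n) l (gamma_n gamma delta d n)%:R /\
     gamma_n gamma delta d n = (gamma * delta ^ n.-1)%N) /\
  (delta%:R = T ->
     (forall l : R, l1 <= l <= alpha <-> l = l1) /\
     (forall n : nat, (1 <= n)%N ->
        wl_is (Qiter p q n) l1 (gamma_n gamma delta d n)%:R)).
Proof.
move=> delta_gt0 p_low p_lead _ _ _ _ vs_vertices sorted1 sorted2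
  s n_s m_s n_s1 m_s1 T gamma d l1 alpha s_gt1 _ d0.
have ms0 : m_s = 0%N := d0.
have [m_gt0 n1_lt_g q_end q_start [above_edge edge_height]] :=
  last_edge_of_vertices vs_vertices sorted1 sorted2 s_gt1 ms0.
have l1E : l1 = (n_s%:R - n_s1%:R) / m_s1%:R by rewrite /l1 ms0 subr0.
have [lower height start] := last_edge_weights (R := R) m_gt0 n1_lt_g above_edge edge_height.
rewrite -l1E in lower height start.
have alpha_delta : alpha * delta%:R = gamma%:R.
  by rewrite /alpha /d ms0 subr0 mulfVK // pnatr_eq0 -lt0n.
have gE n : (1 <= n)%N -> gamma_n gamma delta d n = (gamma * delta ^ n.-1)%N.
  by rewrite /d ms0; exact: gamma_n_d0.
have weights l : l1 <= l <= alpha -> forall n, (1 <= n)%N ->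
    wl_is (Qiter p q n) l (gamma_n gamma delta d n)%:R.
  move=> /andP [l1l lal] n n1; rewrite gE //.
  by move: (wl_Qiter delta_gt0 p_low p_lead lower height q_end q_start start m_gt0
             (leq_ltn_trans (leq0n _) n1_lt_g) l1l lal alpha_delta n1).
split; first by rewrite /d ms0.
split=> [l hl n n1|delta_T]; first by split; [exact: weights | exact: gE].
have alpha_l1 : alpha = l1.
  rewrite /alpha /d ms0 subr0 l1E; apply: alpha_eq_l1 => //.
  by rewrite delta_T /T ms0 subr0.
have l1_le_alpha : l1 <= alpha by rewrite alpha_l1.
split=> [l|n n1]; last by apply: weights => //; apply/andP; split.
split=> [/andP [l1l lal]|->]; last by apply/andP; split.
move: lal; rewrite alpha_l1; lra.
Qed.
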